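(* Let $G_{12}$ be the graph with vertex set $\{1,\dots,12\}$ in which two distinct vertices are adjacent if and only if they both belong to one of the sets $\{1,4,7\}$, $\{2,4,5,6\}$, $\{2,4,6,7\}$, $\{2,4,6,9\}$, $\{2,4,9,12\}$, $\{2,5,8\}$, $\{2,6,7,11\}$, $\{2,11,12\}$, $\{3,6,9\}$, $\{4,5,6,10\}$, $\{4,10,12\}$, $\{6,10,11\}$, $\{10,11,12\}$. Then $G_{12}$ is weakly CIS.
   Context: A family $\mathcal C$ of maximal cliques is edge covering if every two adjacent vertices lie in a common member; a family $\mathcal S$ of maximal stable sets is non-edge covering if every two distinct non-adjacent vertices lie in a common member. A graph is weakly CIS if there are an edge covering family $\mathcal C$ of maximal cliques and a non-edge covering family $\mathcal S$ of maximal stable sets with $C\cap S\neq\emptyset$ for all $C\in\mathcal C$, $S\in\mathcal S$. *)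

From mathcomp Require Import all_boot.
Set Implicit Arguments. Unset Strict Implicit. Unset Printing Implicit Defensive.

(* A simple graph on a finite vertex type T is given by an adjacency relation e
   (assumed symmetric and irreflexive; the graph G12 below is so by construction). *)
Section Graphs.
Variables (T : finType) (e : rel T).

Definition is_clique (A : {set T}) : bool :=
  [forall x in A, forall y in A, (x != y) ==> e x y].

Definition is_stable (A : {set T}) : bool :=
  [forall x in A, forall y in A, (x != y) ==> ~~ e x y].

Definition maximal_clique (A : {set T}) : bool := maxset is_clique A.
Definition maximal_stable (A : {set T}) : bool := maxset is_stable A.

Definition edge_covering (C : {set {set T}}) : Prop :=
  (forall K, K \in C -> maximal_clique K) /\
  (forall x y, e x y -> exists2 K, K \in C & (x \in K) && (y \in K)).

Definition non_edge_covering (S : {set {set T}}) : Prop :=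
  (forall I, I \in S -> maximal_stable I) /\
  (forall x y, x != y -> ~~ e x y -> exists2 I, I \in S & (x \in I) && (y \in I)).

Definition weakly_CIS : Prop :=
  exists (C S : {set {set T}}),
    [/\ edge_covering C, non_edge_covering S &
        forall K I, K \in C -> I \in S -> K :&: I != set0].
End Graphs.

(* Vertex i : 'I_12 represents the paper's vertex i+1. *)
Definition G12_sets : seq (seq nat) :=
  [:: [:: 1; 4; 7]; [:: 2; 4; 5; 6]; [:: 2; 4; 6; 7]; [:: 2; 4; 6; 9];
      [:: 2; 4; 9; 12]; [:: 2; 5; 8]; [:: 2; 6; 7; 11]; [:: 2; 11; 12];
      [:: 3; 6; 9]; [:: 4; 5; 6; 10]; [:: 4; 10; 12]; [:: 6; 10; 11];
      [:: 10; 11; 12]].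

Definition G12 : rel 'I_12 := fun x y =>
  (x != y) && has (fun s => (x.+1 \in s) && (y.+1 \in s)) G12_sets.

(* A clique or stable set of a finite graph is maximal as
   soon as no single vertex extends it, so all conditions reduce to boolean
   checks over an explicit enumeration of the vertices, decided by evaluation. *)
From mathcomp Require Import all_boot.
Set Implicit Arguments. Unset Strict Implicit. Unset Printing Implicit Defensive.

Lemma maxset_hereditary (T : finType) (P : pred {set T}) (A : {set T}) :
    (forall B C : {set T}, B \subset C -> P C -> P B) ->
    P A -> (forall x, x \notin A -> ~~ P (x |: A)) -> maxset P A.
Proof.
move=> hered PA nonext; apply/maxsetP; split=> // B PB sAB.
apply/eqP; rewrite eq_sym eqEsubset sAB /=; apply/subsetP => x xB.
apply/negPn/negP => xA; have /negP[] := nonext x xA.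
by apply: hered PB; rewrite subUset sub1set xB.
Qed.

Lemma is_clique_subset (T : finType) (e : rel T) (A B : {set T}) :
  A \subset B -> is_clique e B -> is_clique e A.
Proof.
move=> /subsetP sAB /forall_inP cliqueB; apply/forall_inP => x xA.
apply/forall_inP => y yA; have /forall_inP cliqueBx := cliqueB x (sAB x xA).
exact: cliqueBx y (sAB y yA).
Qed.

Lemma maximal_stableE (T : finType) (e : rel T) (A : {set T}) :
  maximal_stable e A = maximal_clique (fun x y => ~~ e x y) A.
Proof. by []. Qed.

(* Unlike [enum 'I_n.+1] and [inord], whose definitions go through opaque
   proofs, this enumeration reduces under [vm_compute]. *)
Definition ord_seq (n : nat) : seq 'I_n.+1 :=
  [seq Ordinal (ltn_pmod i (ltn0Sn n)) | i <- iota 0 n.+1].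

Lemma mem_ord_seq (n : nat) (x : 'I_n.+1) : x \in ord_seq n.
Proof.
apply/mapP; exists (val x); first by rewrite mem_iota add0n ltn_ord.
by apply: val_inj; rewrite /= modn_small.
Qed.

Section FiniteChecks.
Variables (T : finType) (e : rel T) (vs : seq T).
Hypothesis vs_full : forall x, x \in vs.

Definition cliqueb (p : pred T) : bool :=
  all (fun x => all (fun y => p x ==> p y ==> (x != y) ==> e x y) vs) vs.

Definition maximal_cliqueb (p : pred T) : bool :=
  cliqueb p && all (fun z => p z || ~~ cliqueb (predU1 z p)) vs.

Lemma is_clique_setE (p : pred T) : is_clique e [set x | p x] = cliqueb p.
Proof.
apply/forall_inP/allP => [cliq x _ | cliq x].
  apply/allP => y _; apply/implyP => px; apply/implyP => py.
  have /forall_inP cliqx : [forall y in [set x | p x], (x != y) ==> e x y].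
    by apply: cliq; rewrite inE.
  by apply: cliqx; rewrite inE.
rewrite inE => px; apply/forall_inP => y; rewrite inE => py.
by have /allP/(_ y (vs_full y)) := cliq x (vs_full x); rewrite px py.
Qed.

Lemma maximal_cliqueb_set (p : pred T) :
  maximal_cliqueb p -> maximal_clique e [set x | p x].
Proof.
case/andP => cliq /allP nonext; apply: maxset_hereditary.
- exact: is_clique_subset.
- by rewrite is_clique_setE.
move=> z; rewrite inE => pz.
have -> : z |: [set x | p x] = [set x | predU1 z p x] by apply/setP => x; rewrite !inE.
by rewrite is_clique_setE; have := nonext z (vs_full z); rewrite (negbTE pz).
Qed.

Definition family (I : eqType) (m : I -> pred T) (Is : seq I) : {set {set T}} :=
  [set K in [seq [set x | m i x] | i <- Is]].

Lemma familyP (I : eqType) (m : I -> pred T) (Is : seq I) (K : {set T}) :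
  reflect (exists2 i, i \in Is & K = [set x | m i x]) (K \in family m Is).
Proof. by rewrite inE; apply: (iffP mapP). Qed.

Lemma family_maximal_cliques (I : eqType) (m : I -> pred T) (Is : seq I) :
  all (fun i => maximal_cliqueb (m i)) Is ->
  forall K, K \in family m Is -> maximal_clique e K.
Proof. by move=> /allP maxI K /familyP[i iI ->]; apply/maximal_cliqueb_set/maxI. Qed.

Lemma family_covers (I : eqType) (m : I -> pred T) (Is : seq I) (r : rel T) :
  all (fun x => all (fun y => r x y ==> has (fun i => m i x && m i y) Is) vs) vs ->
  forall x y, r x y -> exists2 K, K \in family m Is & (x \in K) && (y \in K).
Proof.
move=> /allP cover x y rxy.
have /allP/(_ y (vs_full y))/implyP/(_ rxy)/hasP[i iI /andP[mx my]] := cover x (vs_full x).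
by exists [set x | m i x]; [apply/familyP; exists i | rewrite !inE mx my].
Qed.

Lemma family_meets (I J : eqType) (m : I -> pred T) (m' : J -> pred T)
    (Is : seq I) (Js : seq J) :
  all (fun i => all (fun j => has (fun x => m i x && m' j x) vs) Js) Is ->
  forall K L, K \in family m Is -> L \in family m' Js -> K :&: L != set0.
Proof.
move=> /allP meet K L /familyP[i iI ->] /familyP[j jJ ->].
have /allP/(_ j jJ)/hasP[x _ /andP[mx m'x]] := meet i iI.
by apply/set0Pn; exists x; rewrite !inE mx m'x.
Qed.

End FiniteChecks.

Definition labelled (s : seq nat) : pred 'I_12 := fun x => x.+1 \in s.

Definition G12_cliques : seq (seq nat) :=
  [:: [:: 1; 4; 7]; [:: 2; 5; 8]; [:: 3; 6; 9]; [:: 4; 5; 6; 10];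
      [:: 2; 6; 7; 11]; [:: 2; 4; 9; 12]; [:: 10; 11; 12]].

Definition G12_stables : seq (seq nat) :=
  [:: [:: 1; 2; 3; 10]; [:: 7; 8; 9; 10]; [:: 3; 4; 8; 11];
      [:: 1; 5; 9; 11]; [:: 3; 5; 7; 12]; [:: 1; 6; 8; 12]].

Lemma G12_cliques_maximal :
  all (fun s => maximal_cliqueb G12 (ord_seq 11) (labelled s)) G12_cliques.
Proof. by vm_compute. Qed.

Lemma G12_stables_maximal :
  all (fun s => maximal_cliqueb (fun x y => ~~ G12 x y) (ord_seq 11) (labelled s))
    G12_stables.
Proof. by vm_compute. Qed.

Lemma G12_edges_covered :
  all (fun x => all (fun y => G12 x y ==>
    has (fun s => labelled s x && labelled s y) G12_cliques) (ord_seq 11)) (ord_seq 11).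
Proof. by vm_compute. Qed.

Lemma G12_non_edges_covered :
  all (fun x => all (fun y => (x != y) && ~~ G12 x y ==>
    has (fun s => labelled s x && labelled s y) G12_stables) (ord_seq 11)) (ord_seq 11).
Proof. by vm_compute. Qed.

Lemma G12_cliques_meet_stables :
  all (fun s => all (fun t => has (fun x => labelled s x && labelled t x) (ord_seq 11))
    G12_stables) G12_cliques.
Proof. by vm_compute. Qed.

Theorem proposition34 : weakly_CIS G12.
Proof.
have vs_full := @mem_ord_seq 11.
exists (family labelled G12_cliques), (family labelled G12_stables).
split; [split | split | ].
- exact: (family_maximal_cliques (m := labelled) vs_full G12_cliques_maximal).
- exact: (family_covers (m := labelled) vs_full G12_edges_covered).
- move=> S; rewrite maximal_stableE.
  exact: (family_maximal_cliques (m := labelled) vs_full G12_stables_maximal).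
- move=> x y neq_xy nadj_xy.
  by apply: (family_covers (m := labelled) vs_full G12_non_edges_covered); rewrite neq_xy.
- exact: (family_meets (m := labelled) (m' := labelled) G12_cliques_meet_stables).
Qed.
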